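(* Let $X$ be a nonempty set and let $k,k'$ be real-valued positive-definite kernel functions on $X$, with $k$ injective. Then: (1) if $\theta_1>0$ and $\theta_2\ge0$, then $\theta_1k+\theta_2k'$ is injective; (2) if $p\ge1$ is an odd integer, then $k^p$ is injective; (3) if $k$ takes only nonnegative values, then $k^p$ is injective for every integer $p\ge1$. Consequently, if $k$ is nonnegative-valued and $\psi:k(X\times X)\to\mathbb{R}$ is given by a convergent power series $\psi(t)=\sum_{n=0}^\infty a_nt^n$ with every $a_n\ge0$ and $a_n>0$ for some $n\ge1$, then $\psi\circ k$ is injective.
   Context: A function $k:X\times X\to\mathbb{R}$ is a positive-definite kernel if $\sum_{i,j=1}^ma_ia_jk(x_i,x_j)\ge0$ for all finite families $x_1,\dots,x_m\in X$, $a_1,\dots,a_m\in\mathbb{R}$. A positive-definite kernel $k$ is called injective if $k(x,x)-2k(x,y)+k(y,y)>0$ for all distinct $x,y\in X$ (equivalently, the feature map of its reproducing kernel Hilbert space is injective). Powers $k^p$ are taken pointwise. *)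

From HB Require Import structures.
From mathcomp Require Import all_boot all_order all_algebra.
From mathcomp Require Import all_classical all_reals all_analysis.
Set Implicit Arguments. Unset Strict Implicit. Unset Printing Implicit Defensive.
Import Order.TTheory GRing.Theory Num.Theory.
Import numFieldNormedType.Exports.
Local Open Scope ring_scope.

Definition pd_kernel (R : realType) (X : Type) (k : X -> X -> R) : Prop :=
  (forall x y, k x y = k y x) /\
  (forall (m : nat) (x : 'I_m -> X) (a : 'I_m -> R),
      0 <= \sum_(i < m) \sum_(j < m) a i * a j * k (x i) (x j)).

Definition injective_kernel (R : realType) (X : Type) (k : X -> X -> R) : Prop :=
  forall x y : X, x <> y -> 0 < k x x - 2 * k x y + k y y.

Definition kpow (R : realType) (X : Type) (k : X -> X -> R) (p : nat) : X -> X -> R :=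
  fun x y => k x y ^+ p.

Definition power_series (R : realType) (a : nat -> R) (t : R) : R :=
  limn (series (fun n => a n * t ^+ n)).

From HB Require Import structures.
From mathcomp Require Import all_boot all_order all_algebra.
From mathcomp Require Import all_classical all_reals all_analysis.
From mathcomp Require Import lra.
Import Order.TTheory GRing.Theory Num.Theory.
Import numFieldNormedType.Exports.
Local Open Scope ring_scope.

(* Write a = k(x,x), b = k(y,y), c = k(x,y), so that injectivity asks for a
   positive gap a - 2c + b. Positive-definiteness gives c^2 <= a b, hence
   2c <= a + b with equality only when a = b = c. If c >= 0 the same
   constraints hold for a^p, b^p, c^p, and a^p = b^p = c^p would force
   a = b = c; for odd p and c < 0 the term -2 c^p is positive. For a power
   series with nonnegative coefficients the gap is sum_n a_n (a^n - 2 c^n + b^n),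
   a convergent series of nonnegative terms one of which is positive. *)

Lemma AGM2_eq (R : realFieldType) (a b c : R) :
  0 <= a -> 0 <= b -> 0 <= c -> c ^+ 2 <= a * b -> a + b <= 2 * c ->
  a = c /\ b = c.
Proof. by move=> *; split; nra. Qed.

Lemma ltr_sum_expn (R : realFieldType) (a b c : R) (p : nat) : (0 < p)%N ->
  0 <= a -> 0 <= b -> 0 <= c -> c ^+ 2 <= a * b -> 2 * c < a + b ->
  2 * c ^+ p < a ^+ p + b ^+ p.
Proof.
move=> p_gt0 a_ge0 b_ge0 c_ge0 cab lt_c_ab; rewrite ltNge; apply/negP => le_ab_c.
have cab_p : (c ^+ p) ^+ 2 <= a ^+ p * b ^+ p.
  rewrite -exprM mulnC exprM -exprMn lerXn2r ?nnegrE ?exprn_ge0 ?mulr_ge0 //.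
have [eq_ac eq_bc] : a ^+ p = c ^+ p /\ b ^+ p = c ^+ p.
  by apply: AGM2_eq; rewrite ?exprn_ge0.
have a_eq_c : a = c by apply/eqP; rewrite -(eqrXn2 p_gt0) // eq_ac.
have b_eq_c : b = c by apply/eqP; rewrite -(eqrXn2 p_gt0) // eq_bc.
by move: lt_c_ab; rewrite a_eq_c b_eq_c; lra.
Qed.

Section PositiveDefiniteKernel.
Context {R : realType} {X : Type} {k : X -> X -> R} (pdk : pd_kernel k).

Lemma pd_kernel_quad_ge0 x y t s :
  0 <= t * t * k x x + 2 * t * s * k x y + s * s * k y y.
Proof.
have [sym gram_ge0] := pdk.
have := gram_ge0 2%N (fun i : 'I_2 => if val i == 0%N then x else y)
                     (fun i : 'I_2 => if val i == 0%N then t else s).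
rewrite !big_ord_recr !big_ord0 /= (sym y x); lra.
Qed.

Lemma pd_kernel_diag_ge0 x : 0 <= k x x.
Proof. by have := pd_kernel_quad_ge0 x x 1 0; lra. Qed.

Lemma pd_kernel_gap_ge0 x y : 0 <= k x x - 2 * k x y + k y y.
Proof. by have := pd_kernel_quad_ge0 x y 1 (-1); lra. Qed.

Lemma pd_kernel_cauchy_schwarz x y : k x y ^+ 2 <= k x x * k y y.
Proof.
have q := pd_kernel_quad_ge0 x y.
set a := k x x in q *; set b := k y y in q *; set c := k x y in q *.
have [a_gt0|a_le0] := ltrP 0 a.
  have : 0 <= a * (a * b - c ^+ 2) by have := q c (- a); nra.
  by rewrite pmulr_rge0 //; lra.
have [b_gt0|b_le0] := ltrP 0 b.
  have : 0 <= b * (a * b - c ^+ 2) by have := q b (- c); nra.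
  by rewrite pmulr_rge0 //; lra.
have c0 : c = 0 by have := q 1 1; have := q 1 (-1); lra.
have := pd_kernel_diag_ge0 x; have := pd_kernel_diag_ge0 y.
by rewrite c0 expr2; nra.
Qed.

Lemma kpow_gap_gt0 x y p : (0 < p)%N -> 0 <= k x y ->
  0 < k x x - 2 * k x y + k y y ->
  0 < kpow k p x x - 2 * kpow k p x y + kpow k p y y.
Proof.
move=> p_gt0 c_ge0 gap_gt0; rewrite /kpow.
have : 2 * k x y ^+ p < k x x ^+ p + k y y ^+ p.
  apply: ltr_sum_expn; rewrite ?pd_kernel_diag_ge0 ?pd_kernel_cauchy_schwarz //.
  by lra.
by lra.
Qed.

End PositiveDefiniteKernel.

Lemma injective_kernel_lincomb (R : realType) (X : Type) (k k' : X -> X -> R)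
    (t1 t2 : R) :
  injective_kernel k -> pd_kernel k' -> 0 < t1 -> 0 <= t2 ->
  injective_kernel (fun x y => t1 * k x y + t2 * k' x y).
Proof.
move=> injk pdk' t1_gt0 t2_ge0 x y neq_xy.
have := mulr_gt0 t1_gt0 (injk x y neq_xy).
have := mulr_ge0 t2_ge0 (pd_kernel_gap_ge0 pdk' x y).
by lra.
Qed.

Lemma injective_kernel_kpow_odd (R : realType) (X : Type) (k : X -> X -> R) p :
  pd_kernel k -> injective_kernel k -> odd p -> injective_kernel (kpow k p).
Proof.
move=> pdk injk odd_p x y neq_xy.
have [c_ge0|c_lt0] := lerP 0 (k x y).
  by apply: kpow_gap_gt0 => //; [case: p odd_p | exact: injk].
have : kpow k p x y < 0 by rewrite /kpow exprn_odd_lt0.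
have := exprn_ge0 p (pd_kernel_diag_ge0 pdk x).
have := exprn_ge0 p (pd_kernel_diag_ge0 pdk y).
by rewrite /kpow; lra.
Qed.

Lemma injective_kernel_kpow_nneg (R : realType) (X : Type) (k : X -> X -> R) p :
  pd_kernel k -> injective_kernel k -> (forall x y, 0 <= k x y) -> (0 < p)%N ->
  injective_kernel (kpow k p).
Proof. by move=> pdk injk k_ge0 p_gt0 x y /injk; exact: kpow_gap_gt0. Qed.

Lemma cvg_series_gt0 {R : realFieldType} {w : R ^nat} {l : R} (n0 : nat) :
  (forall n, 0 <= w n) -> 0 < w n0 -> (series w @ \oo --> l)%classic -> 0 < l.
Proof.
move=> w_ge0 wn0_gt0 cvg_w.
have partial_le : series w n0.+1 <= l.
  rewrite -(cvg_lim _ cvg_w) //; apply: nondecreasing_cvgn_le; last first.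
    by apply/cvg_ex; exists l.
  by apply: nondecreasing_series => *; exact: w_ge0.
have : 0 <= series w n0 by apply: sumr_ge0 => *; exact: w_ge0.
by move: partial_le; rewrite /series /= big_nat_recr //=; lra.
Qed.

Lemma power_series_gap_cvg {R : realType} {a : R ^nat} {A B C : R} :
  cvgn (series (fun n => a n * A ^+ n)) ->
  cvgn (series (fun n => a n * B ^+ n)) ->
  cvgn (series (fun n => a n * C ^+ n)) ->
  (series (fun n => a n * (A ^+ n - 2 * C ^+ n + B ^+ n)) @ \oo -->
    power_series a A - 2 * power_series a C + power_series a B)%classic.
Proof.
move=> cvg_A cvg_B cvg_C.
pose S t := series (fun n => a n * t ^+ n).
have -> : series (fun n => a n * (A ^+ n - 2 * C ^+ n + B ^+ n)) =
    (fun n => S A n - 2 * S C n + S B n).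
  apply/funext => n; rewrite /S /series /= mulr_sumr -sumrN -!big_split /=.
  by apply: eq_bigr => i _; lra.
rewrite /power_series; apply: cvgD; [apply: cvgB|].
- exact: cvg_A.
- by apply: cvgM; [exact: cvg_cst | exact: cvg_C].
- exact: cvg_B.
Qed.

Lemma injective_kernel_power_series (R : realType) (X : Type)
    (k : X -> X -> R) (a : R ^nat) :
  pd_kernel k -> injective_kernel k -> (forall x y, 0 <= k x y) ->
  (forall n, 0 <= a n) -> (exists n, (1 <= n)%N /\ 0 < a n) ->
  (forall x y, cvgn (series (fun n => a n * k x y ^+ n))) ->
  injective_kernel (fun x y => power_series a (k x y)).
Proof.
move=> pdk injk k_ge0 a_ge0 [n0 [n0_gt0 an0_gt0]] cvg_k x y neq_xy.
have gap_pow n : (0 < n)%N -> 0 < k x x ^+ n - 2 * k x y ^+ n + k y y ^+ n.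
  by move=> n_gt0; exact: injective_kernel_kpow_nneg.
have := power_series_gap_cvg (cvg_k x x) (cvg_k y y) (cvg_k x y).
apply: (cvg_series_gt0 n0).
- by case=> [|n]; rewrite ?expr0 ?subrr; [lra | apply/mulr_ge0/ltW/gap_pow].
- exact/mulr_gt0/gap_pow.
Qed.

Theorem lemma2 (R : realType) (X : Type) (k k' : X -> X -> R) :
  (exists x : X, True) ->
  pd_kernel k -> pd_kernel k' -> injective_kernel k ->
  (forall theta1 theta2 : R, 0 < theta1 -> 0 <= theta2 ->
      injective_kernel (fun x y => theta1 * k x y + theta2 * k' x y)) /\
  (forall p : nat, odd p -> injective_kernel (kpow k p)) /\
  ((forall x y, 0 <= k x y) ->
     (forall p : nat, (1 <= p)%N -> injective_kernel (kpow k p)) /\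
     (forall a : nat -> R,
        (forall n, 0 <= a n) ->
        (exists n : nat, (1 <= n)%N /\ 0 < a n) ->
        (forall x y : X, cvgn (series (fun n => a n * k x y ^+ n))) ->
        injective_kernel (fun x y => power_series a (k x y)))).
Proof.
move=> _ pdk pdk' injk; split.
  by move=> t1 t2; exact: injective_kernel_lincomb.
split; first by move=> p; exact: injective_kernel_kpow_odd.
move=> k_ge0; split; first by move=> p; exact: injective_kernel_kpow_nneg.
by move=> a; exact: injective_kernel_power_series.
Qed.
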